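(* Let $(C,\mathfrak p,\mathfrak d)$ be a regular $q$-cycle coalgebra with $\mathfrak p_{11}^1\ne0$. Then $\mathfrak d_{b1}^c=\mathfrak p_{b1}^c$ for all $b,c\in\{0,\dots,n-1\}$.
   Context: $K$ is an algebraically closed field of characteristic $0$ and $n\ge2$. $C$ is the coalgebra dual to $K[y]/\langle y^n\rangle$: basis $x_0,\dots,x_{n-1}$, $\Delta(x_i)=\sum_{j+k=i}x_j\otimes x_k$, $\epsilon(x_i)=\delta_{i0}$; $C\otimes C$ has the tensor product coalgebra structure; Sweedler notation $\Delta(b)=b_{(1)}\otimes b_{(2)}$. For linear maps $\mathfrak p,\mathfrak d\colon C\otimes C\to C$ write $a\cdot b=\mathfrak p(a\otimes b)$, $a:b=\mathfrak d(a\otimes b)$, $\mathfrak p(x_i\otimes x_j)=\sum_{k=0}^{n-1}\mathfrak p_{ij}^kx_k$, $\mathfrak d(x_i\otimes x_j)=\sum_{k=0}^{n-1}\mathfrak d_{ij}^kx_k$. A triple $(C,\mathfrak p,\mathfrak d)$ with $\mathfrak p,\mathfrak d$ coalgebra morphisms is a regular $q$-magma coalgebra if there are coalgebra morphisms $a\otimes b\mapsto a^b$, $a\otimes b\mapsto a_b$ from $C\otimes C$ to $C$ with $a^{b_{(1)}}\cdot b_{(2)}=(a\cdot b_{(1)})^{b_{(2)}}=\epsilon(b)a$ and $(a:b_{(2)})_{b_{(1)}}=a_{b_{(2)}}:b_{(1)}=\epsilon(b)a$. It is a regular $q$-cycle coalgebra if moreover for all $a,b,c$: (1) $(a\cdot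 b_{(1)})\cdot(c:b_{(2)})=(a\cdot c_{(2)})\cdot(b\cdot c_{(1)})$; (2) $(a\cdot b_{(1)}):(c\cdot b_{(2)})=(a:c_{(2)})\cdot(b:c_{(1)})$; (3) $(a:b_{(1)}):(c:b_{(2)})=(a:c_{(2)}):(b\cdot c_{(1)})$. *)

From HB Require Import structures.
From mathcomp Require Import all_boot all_order all_algebra.
Set Implicit Arguments. Unset Strict Implicit. Unset Printing Implicit Defensive.
Import GRing.Theory.
Local Open Scope ring_scope.

(* Elements of C (basis x_0..x_{n-1}) are row vectors 'rV[K]_n;
   v 0 k is the coefficient of x_k.  Elements of C (x) C are n x n matrices,
   entry (u,w) being the coefficient of x_u (x) x_w.
   A linear map C (x) C -> C is given by its values M i j = M(x_i (x) x_j),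
   so the structure constant m_{ij}^k is  M i j 0 k. *)

Section QCycle.
Variables (K : fieldType) (n : nat).

Definition bvec (i : 'I_n) : 'rV[K]_n := delta_mx 0 i.

Definition ceps (v : 'rV[K]_n) : K := \sum_(k < n | val k == 0%N) v 0 k.

Definition cdelta (v : 'rV[K]_n) : 'M[K]_n :=
  \matrix_(u, w) \sum_(k < n | (val u + val w == val k)%N) v 0 k.

Definition tens (u v : 'rV[K]_n) : 'M[K]_n := \matrix_(k, l) (u 0 k * v 0 l).

Definition bil (M : 'I_n -> 'I_n -> 'rV[K]_n) (a b : 'rV[K]_n) : 'rV[K]_n :=
  \sum_(i < n) \sum_(j < n) (a 0 i * b 0 j) *: M i j.

(* M : C (x) C -> C is a coalgebra morphism (C (x) C with the tensor product
   coalgebra structure); checked on the basis x_i (x) x_j. *)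
Definition coalg_morph (M : 'I_n -> 'I_n -> 'rV[K]_n) : Prop :=
  (forall i j, ceps (M i j) = ceps (bvec i) * ceps (bvec j)) /\
  (forall i j : 'I_n,
     cdelta (M i j) =
     \sum_(a < n) \sum_(b < n | (val a + val b == val i)%N)
       \sum_(c < n) \sum_(d < n | (val c + val d == val j)%N)
          tens (M a c) (M b d)).

(* Sweedler sum: sw b F = F(b_(1), b_(2)) for F bilinear. *)
Definition sw (b : 'rV[K]_n) (F : 'rV[K]_n -> 'rV[K]_n -> 'rV[K]_n) : 'rV[K]_n :=
  \sum_(i < n) \sum_(j < n) \sum_(k < n | (val j + val k == val i)%N)
     b 0 i *: F (bvec j) (bvec k).

Definition regular_qmagma (P D : 'I_n -> 'I_n -> 'rV[K]_n) : Prop :=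
  coalg_morph P /\ coalg_morph D /\
  exists L R : 'I_n -> 'I_n -> 'rV[K]_n,   (* a^b = bil L a b, a_b = bil R a b *)
    coalg_morph L /\ coalg_morph R /\
    (forall a b, sw b (fun b1 b2 => bil P (bil L a b1) b2) = ceps b *: a) /\
    (forall a b, sw b (fun b1 b2 => bil L (bil P a b1) b2) = ceps b *: a) /\
    (forall a b, sw b (fun b1 b2 => bil R (bil D a b2) b1) = ceps b *: a) /\
    (forall a b, sw b (fun b1 b2 => bil D (bil R a b2) b1) = ceps b *: a).

Definition regular_qcycle (P D : 'I_n -> 'I_n -> 'rV[K]_n) : Prop :=
  regular_qmagma P D /\
  (forall a b c,
     sw b (fun b1 b2 => bil P (bil P a b1) (bil D c b2)) =
     sw c (fun c1 c2 => bil P (bil P a c2) (bil P b c1))) /\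
  (forall a b c,
     sw b (fun b1 b2 => bil D (bil P a b1) (bil P c b2)) =
     sw c (fun c1 c2 => bil P (bil D a c2) (bil D b c1))) /\
  (forall a b c,
     sw b (fun b1 b2 => bil D (bil D a b1) (bil D c b2)) =
     sw c (fun c1 c2 => bil D (bil D a c2) (bil P b c1))).

End QCycle.

(* Dually, a coalgebra morphism M : C (x) C -> C is an algebra map
   K[y]/(y^n) -> K[s,t]/(s^n,t^n), y |-> f = sum m_{ac}^1 s^a t^c, so that
   m_{ac}^u is the coefficient of s^a t^c in f^u, and f^n = 0.
   Regularity makes the coefficient mu of s in f nonzero.  If m is least with
   a monomial t^m in f, the coefficient of s^(n-1) t^m in f^n is
   n mu^(n-1) m_{0m}^1, so in characteristic 0 f(0,t) = 0: x_0 is a left unit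
   for p and d.  The first cycle identity at (x_1, x_0, x_c) and (x_1, x_c, x_0)
   then forces x_0 to be a right unit as well (this uses p_{11}^1 <> 0), and at
   (x_1, x_1, x_1) it gives d_{11}^1 = p_{11}^1.  Finally d(x_r (x) x_1) =
   p(x_r (x) x_1) by induction on r: the coefficients of x_k, k >= 2, follow
   from comultiplicativity, and that of x_1 from the second cycle identity at
   (x_r, x_1, x_1) after dividing by p_{r1}^r = r p_{11}^1. *)

From HB Require Import structures.
From mathcomp Require Import all_boot all_order all_algebra.
From mathcomp Require Import zify ring.
Import GRing.Theory.
Local Open Scope ring_scope.

Set Implicit Arguments.
Unset Strict Implicit.

Section BigSums.
Variable V : nmodType.

Lemma sum_single (T : nat -> V) N i0 : (i0 < N)%N ->
  (forall i, (i < N)%N -> i != i0 -> T i = 0) -> \sum_(i < N) T i = T i0.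
Proof.
move=> h H; rewrite (bigD1 (Ordinal h)) //= big1 ?addr0 // => i hi.
by apply: H => //; rewrite -val_eqE in hi.
Qed.

Lemma sum2_single (T : nat -> nat -> V) A C a0 c0 : (a0 < A)%N -> (c0 < C)%N ->
  (forall a c, (a < A)%N -> (c < C)%N -> ~~ ((a == a0) && (c == c0)) -> T a c = 0) ->
  \sum_(a < A) \sum_(c < C) T a c = T a0 c0.
Proof.
move=> ha hc H; rewrite (sum_single (T := fun a => \sum_(c < C) T a c) ha).
  by apply: sum_single => // c hcC hne; apply: H; rewrite ?eqxx.
by move=> a haA hne; rewrite big1 // => c _; apply: H; rewrite ?(negbTE hne).
Qed.

Lemma sum2_pair (T : nat -> nat -> V) A C a0 c0 a1 c1 :
  (a0 < A)%N -> (c0 < C)%N -> (a1 < A)%N -> (c1 < C)%N -> a0 != a1 ->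
  (forall a c, (a < A)%N -> (c < C)%N -> ~~ ((a == a0) && (c == c0)) ->
      ~~ ((a == a1) && (c == c1)) -> T a c = 0) ->
  \sum_(a < A) \sum_(c < C) T a c = T a0 c0 + T a1 c1.
Proof.
move=> ha0 hc0 ha1 hc1 hne H.
rewrite (bigD1 (Ordinal ha0)) //= (bigD1 (Ordinal ha1)) /=; last by rewrite -val_eqE /= eq_sym.
rewrite (sum_single (T := T a0) hc0); last first.
  by move=> c hc hc'; apply: H; rewrite ?eqxx ?(negbTE hne).
rewrite (sum_single (T := T a1) hc1); last first.
  by move=> c hc hc'; apply: H; rewrite ?eqxx // eq_sym (negbTE hne).
rewrite big1 ?addr0 // => a /andP[h1 h2]; apply: big1 => c _.
rewrite -val_eqE /= in h1; rewrite -val_eqE /= in h2.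
by apply: H => //; apply/negP => /andP[/eqP e _]; move: h1 h2; rewrite e; lia.
Qed.

Lemma sum_antidiagonal n (G : nat -> nat -> V) j : (j < n)%N ->
  \sum_(c < n) \sum_(d < n | (val c + val d == j)%N) G c d = \sum_(c < j.+1) G c (j - c)%N.
Proof.
move=> hj.
have inner (c : 'I_n) : \sum_(d < n | (val c + val d == j)%N) G c d
    = if (c <= j)%N then G c (j - c)%N else 0.
  case: leqP => h; last by rewrite big_pred0 // => d /=; apply/negbTE; lia.
  have hd : (j - c < n)%N by lia.
  by rewrite (big_pred1 (Ordinal hd)) // => d /=; rewrite -val_eqE /=; apply/eqP/eqP; lia.
rewrite (eq_bigr _ (fun c _ => inner c)) -big_mkcond /=.
by rewrite (big_ord_widen n (fun c => G c (j - c)%N)).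
Qed.

End BigSums.

Section StructureConstants.
Variables (K : fieldType) (n : nat).
Implicit Types (M : 'I_n -> 'I_n -> 'rV[K]_n).

(* The structure constant m_{ac}^u of M, extended by 0 to indices >= n. *)
Definition coef M (a c u : nat) : K :=
  match (insub a : option 'I_n), (insub c : option 'I_n), (insub u : option 'I_n) with
  | Some a', Some c', Some u' => M a' c' 0 u'
  | _, _, _ => 0
  end.

Lemma coefE M (a c u : 'I_n) : coef M a c u = M a c 0 u.
Proof. by rewrite /coef !valK. Qed.

Lemma coef_out M a c u : ((n <= a) || (n <= c) || (n <= u))%N -> coef M a c u = 0.
Proof.
move=> h; rewrite /coef; case: insubP => // a' ha ea; case: insubP => // c' hc ec.
by case: insubP => // u' hu eu; move: h; rewrite -ea -ec -eu; lia.
Qed.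

Lemma coef_ord M a c u (ha : (a < n)%N) (hc : (c < n)%N) (hu : (u < n)%N) :
  coef M a c u = M (Ordinal ha) (Ordinal hc) 0 (Ordinal hu).
Proof. exact: (coefE M (Ordinal ha) (Ordinal hc) (Ordinal hu)). Qed.

Section CoalgebraMorphism.
Variable M : 'I_n -> 'I_n -> 'rV[K]_n.
Hypothesis hM : coalg_morph M.
Hypothesis hn : (1 < n)%N.

Lemma coef_comultS i j u : (i < n)%N -> (j < n)%N -> (u < n)%N ->
  coef M i j u.+1 =
  \sum_(a < i.+1) \sum_(c < j.+1) coef M a c u * coef M (i - a)%N (j - c)%N 1.
Proof.
move=> hi hj hu; have := congr1 (fun A : 'M[K]_n => A (Ordinal hu) (Ordinal hn))
  (hM.2 (Ordinal hi) (Ordinal hj)).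
rewrite /cdelta mxE /= addn1.
have -> : \sum_(k < n | (u.+1 == k)%N) M (Ordinal hi) (Ordinal hj) 0 k = coef M i j u.+1.
  case: (ltnP u.+1 n) => h.
    by rewrite (big_pred1 (Ordinal h)) ?coef_ord // => k /=; rewrite -val_eqE /= eq_sym.
  rewrite big_pred0 ?coef_out //; first lia.
  by move=> k; apply/negbTE; have := ltn_ord k; lia.
move=> ->; transitivity (\sum_(a < n) \sum_(b < n | (val a + val b == i)%N)
    \sum_(c < n) \sum_(d < n | (val c + val d == j)%N) coef M a c u * coef M b d 1).
  rewrite summxE; apply: eq_bigr => a _; rewrite summxE; apply: eq_bigr => b _.
  rewrite summxE; apply: eq_bigr => c _; rewrite summxE; apply: eq_bigr => d _.
  by rewrite mxE -!coefE.
rewrite -(sum_antidiagonal (fun a b => \sum_(c < j.+1) coef M a c u * coef M b (j - c)%N 1) hi).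
apply: eq_bigr => a _; apply: eq_bigr => b _.
exact: (sum_antidiagonal (fun c d => coef M a c u * coef M b d 1) hj).
Qed.

Lemma coef_counit i j : (i < n)%N -> (j < n)%N ->
  coef M i j 0 = ((i == 0%N) && (j == 0%N))%:R.
Proof.
move=> hi hj; have h0 : (0 < n)%N by lia.
have := hM.1 (Ordinal hi) (Ordinal hj); rewrite /ceps !(big_pred1 (Ordinal h0)) //.
rewrite !mxE /= => e; rewrite (coef_ord _ hi hj h0) e -natrM mulnb.
by rewrite -!val_eqE /= (eq_sym 0%N i) (eq_sym 0%N j).
Qed.

Lemma coef_00_0 : coef M 0 0 0 = 1.
Proof. by rewrite coef_counit //; lia. Qed.

Lemma coef_00_1 : coef M 0 0 1 = 0.
Proof.
set z := coef M 0 0 1.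
have pow k : (k <= n)%N -> coef M 0 0 k = z ^+ k.
  elim: k => [|k IH] hk; first by rewrite coef_counit //; lia.
  by rewrite coef_comultS ?big_ord1 ?IH ?exprSr //; lia.
by have /esym/eqP := pow n (leqnn n); rewrite coef_out ?leqnn ?orbT // expf_eq0 => /andP[_ /eqP].
Qed.

(* Weights of monomials s^a t^c add up in f^u. *)
Lemma coef_weight_vanish (p q W : nat) :
  (forall a c, (a * p + c * q < W)%N -> coef M a c 1 = 0) ->
  forall u a c, (a * p + c * q < u * W)%N -> coef M a c u = 0.
Proof.
move=> hW; elim=> [//|u IH] a c h.
have [/and3P[ha hc hu]|hout] := boolP [&& a < n, c < n & u < n]%N; last first.
  by rewrite coef_out //; move: hout; lia.
rewrite coef_comultS //; apply: big1 => a' _; apply: big1 => c' _.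
have ha' := ltn_ord a'; have hc' := ltn_ord c'.
case: (ltnP (a' * p + c' * q) (u * W)) => h'; first by rewrite IH ?mul0r.
rewrite hW ?mulr0 // !mulnBl.
have : (a' * p <= a * p)%N by rewrite leq_mul2r; apply/orP; right; lia.
have : (c' * q <= c * q)%N by rewrite leq_mul2r; apply/orP; right; lia.
by move: h; rewrite mulSn; lia.
Qed.

Lemma coef_deg_vanish u a c : (a + c < u)%N -> coef M a c u = 0.
Proof.
move=> h; apply: (@coef_weight_vanish 1 1 1); last by rewrite !muln1.
by move=> a' c'; rewrite !muln1 ltnS leqn0 addn_eq0 => /andP[/eqP-> /eqP->]; exact: coef_00_1.
Qed.

Section LeadingCoefficients.
Variable m : nat.
Hypotheses (m_gt0 : (0 < m)%N) (coef_0c_1_lt : forall c, (c < m)%N -> coef M 0 c 1 = 0).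

Lemma coef_weight_m u a c : (a * m + c < u * m)%N -> coef M a c u = 0.
Proof.
move=> h; apply: (@coef_weight_vanish m 1 m) => [a' c'|]; last by rewrite muln1.
by rewrite muln1; case: a' => [|a']; [rewrite mul0n; exact: coef_0c_1_lt | rewrite mulSn; lia].
Qed.

Lemma coef_diag_0 u : (u < n)%N -> coef M u 0 u = coef M 1 0 1 ^+ u.
Proof.
elim: u => [|u IH] hu; first by rewrite coef_counit //; lia.
rewrite coef_comultS //; try lia.
rewrite (sum2_single (T := fun a c => coef M a c u * coef M (u.+1 - a) (0 - c) 1)
   (a0 := u) (c0 := 0)) //; first by rewrite IH ?subSnn ?exprSr //; lia.
move=> a c ha hc hne; have -> : c = 0%N by lia.
case: (ltnP a u) => h; first by rewrite coef_weight_m ?mul0r // addn0 ltn_mul2r m_gt0.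
have -> : a = u.+1 by lia.
by rewrite subnn coef_00_1 mulr0.
Qed.

(* Only the monomials s and t^m of f contribute to s^u t^m in f^(u+1). *)
Lemma coef_diag_m u : (u < n)%N ->
  coef M u m u.+1 = u.+1%:R * coef M 1 0 1 ^+ u * coef M 0 m 1.
Proof.
case: (ltnP m n) => hmn; last first.
  by rewrite [coef M 0 m 1]coef_out ?hmn ?orbT // mulr0 coef_out // hmn orbT.
elim: u => [|u IH] hu; first by rewrite expr0 !mul1r.
rewrite coef_comultS //; try lia.
rewrite (sum2_pair (T := fun a c => coef M a c u.+1 * coef M (u.+1 - a) (m - c) 1)
   (a0 := u.+1) (c0 := 0) (a1 := u) (c1 := m)) //; try lia.
  rewrite subnn subn0 coef_diag_0 // IH; try lia.
  rewrite subSnn subnn exprSr -[u.+2]addn1 -[u.+1]addn1 !natrD; ring.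
move=> a c ha hc hne1 hne2.
case: (ltnP (a * m + c) (u.+1 * m)) => h; first by rewrite coef_weight_m ?mul0r.
case: (eqVneq a u.+1) => [ea|na].
  by rewrite (coef_weight_m (u := 1)) ?mulr0 //; move: hne1; rewrite ea eqxx subnn; lia.
have u_le : (u <= a)%N by rewrite -(leq_pmul2r m_gt0); move: h hc; rewrite mulSn; lia.
have ea : a = u by lia.
by move: hne2 h; rewrite ea eqxx mulSn; lia.
Qed.

End LeadingCoefficients.

Lemma coef_0c_1_eq0 : [pchar K] =i pred0 -> coef M 1 0 1 != 0 ->
  forall c, coef M 0 c 1 = 0.
Proof.
move=> hK hmu; elim/ltn_ind => m IH.
case: (posnP m) => [->|m_gt0]; first exact: coef_00_1.
have /esym/eqP := coef_diag_m m_gt0 IH (u := n.-1) ltac:(lia).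
rewrite [coef M n.-1 m _]coef_out; last by lia.
rewrite !mulf_eq0 expf_eq0 (negbTE hmu) andbF orbF (proj1 (pcharf0P K) hK).
by case/orP => [/eqP|/eqP //]; lia.
Qed.

Lemma coef_10 k : k != 1%N -> coef M 1 0 k = 0.
Proof.
move=> hk; case: (posnP k) => [->|k_gt0]; first by rewrite coef_counit //; lia.
by rewrite coef_deg_vanish //; lia.
Qed.

Section LeftUnit.
Hypothesis coef_0c_1 : forall c, coef M 0 c 1 = 0.

Lemma coef_lt_vanish u a c : (a < u)%N -> coef M a c u = 0.
Proof.
move=> h; apply: (@coef_weight_vanish 1 0 1); last by rewrite !muln1 muln0 addn0.
by move=> a' c'; rewrite muln1 muln0 addn0 ltnS leqn0 => /eqP->.
Qed.

Lemma coef_0c c u : (c < n)%N -> (u < n)%N -> coef M 0 c u = ((c == 0%N) && (u == 0%N))%:R.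
Proof.
move=> hc hu; case: (posnP u) => [->|u_gt0]; first by rewrite coef_counit ?andbT //; lia.
by rewrite coef_lt_vanish // andbF.
Qed.

Lemma coef_1c c k : k != 1%N -> coef M 1 c k = 0.
Proof.
move=> hk; have [k_ge_n | k_lt_n] := leqP n k; first by rewrite coef_out // k_ge_n !orbT.
case: (ltnP c n) => [hc|c_ge_n]; last by rewrite coef_out // c_ge_n orbT.
case: (posnP k) => [->|k_gt0]; first by rewrite coef_counit.
by rewrite coef_lt_vanish //; lia.
Qed.

Lemma coef_c0_gt1 u c : (c < n)%N ->
  (forall c', (c' < c)%N -> coef M c' 0 1 = (c' == 1%N)%:R) ->
  (1 < u)%N -> coef M c 0 u = (c == u)%:R.
Proof.
elim: u c => [//|u IH] c hc hlow hu.
have [u_ge_n | u_lt_n] := leqP n u.+1.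
  by rewrite coef_out ?u_ge_n ?orbT // (_ : (c == u.+1) = false) //; lia.
rewrite coef_comultS //; try lia.
case: (posnP c) => [->|c_gt0]; first by rewrite !big_ord1 coef_lt_vanish ?mul0r //; lia.
rewrite (sum2_single (T := fun a c' => coef M a c' u * coef M (c - a) (0 - c') 1)
   (a0 := c.-1) (c0 := 0)) //; try lia.
  have prev : coef M c.-1 0 u = (c.-1 == u)%:R.
    case: (eqVneq u 1%N) => [->|u_ne1]; first by apply: hlow; lia.
    by apply: IH => //; [lia | move=> c' hc'; apply: hlow; lia | lia].
  rewrite prev sub0n (_ : (c - c.-1)%N = 1%N); last by lia.
  case: (eqVneq c 1%N) => [->|c_ne1].
    by rewrite eqSS; case: u hu {IH prev u_lt_n} => // u _; rewrite mul0r.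
  rewrite hlow ?eqxx ?mulr1; last by lia.
  by rewrite -[c in RHS](prednK c_gt0) eqSS.
move=> a c' ha hc' hne; have -> : c' = 0%N by lia.
case: (posnP a) => [->|a_gt0]; first by rewrite coef_lt_vanish ?mul0r //; lia.
case: (eqVneq a c) => [->|a_ne_c]; first by rewrite subnn coef_00_1 mulr0.
rewrite sub0n hlow; last by lia.
by rewrite (_ : (c - a == 1)%N = false) ?mulr0 //; move: hne; lia.
Qed.

Lemma coef_c0_id (h : nat -> K) : h 1%N != 0 ->
  (forall c, (c < n)%N -> \sum_(j < n) coef M c 0 j * h j = h c) ->
  forall c j, (c < n)%N -> (j < n)%N -> coef M c 0 j = (c == j)%:R.
Proof.
move=> h1 hs.
have coef_c0_1 c : (c < n)%N -> coef M c 0 1 = (c == 1%N)%:R.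
  elim/ltn_ind: c => c IH hc.
  have : \sum_(j < n) (coef M c 0 j - (c == j)%:R) * h j = 0.
    under eq_bigr => j _ do rewrite mulrBl.
    rewrite sumrB hs // (sum_single (T := fun j => (c == j)%:R * h j) hc) ?eqxx ?mul1r ?subrr //.
    by move=> i _ hi; rewrite eq_sym (negbTE hi) mul0r.
  rewrite (sum_single (T := fun j => (coef M c 0 j - (c == j)%:R) * h j) (i0 := 1)) //; try lia.
    by move/eqP; rewrite mulf_eq0 (negbTE h1) orbF subr_eq0 eq_sym => /eqP.
  move=> j hj hj1; case: (posnP j) => [->|j_gt0].
    by rewrite coef_counit ?eqxx ?andbT ?subrr ?mul0r //; lia.
  by rewrite coef_c0_gt1 ?subrr ?mul0r //; [move=> c' hc'; apply: IH; lia | lia].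
move=> c j hc hj; case: (posnP j) => [->|j_gt0]; first by rewrite coef_counit ?andbT //; lia.
case: (eqVneq j 1%N) => [->|j_ne1]; first by rewrite coef_c0_1.
by apply: coef_c0_gt1 => //; [move=> c' hc'; apply: coef_c0_1; lia | lia].
Qed.
End LeftUnit.

Lemma coef_diag_1 r :
  (forall c j, (c < n)%N -> (j < n)%N -> coef M c 0 j = (c == j)%:R) ->
  (r < n)%N -> coef M r 1 r = r%:R * coef M 1 1 1.
Proof.
move=> hid; elim: r => [|r IH] hr; first by rewrite coef_counit ?mul0r //; lia.
rewrite coef_comultS //; try lia.
rewrite (sum_single (T := fun a => \sum_(c < 2) coef M a c r * coef M (r.+1 - a) (1 - c) 1)
   (i0 := r)); try lia.
  rewrite !big_ord_recr big_ord0 /= add0r subSnn subnn subn0 IH ?hid ?eqxx; try lia.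
  by rewrite mul1r mulr1 mulrSr mulrDl mul1r addrC.
move=> a ha hne; rewrite !big_ord_recr big_ord0 /= add0r subn0 subnn hid; try lia.
rewrite (negbTE hne) mul0r add0r.
case: (ltnP (r.+1 - a) n) => hra; last by rewrite coef_out ?mulr0 //; lia.
by rewrite hid // (_ : (r.+1 - a == 1)%N = false) ?mulr0 //; lia.
Qed.

End CoalgebraMorphism.

Lemma bvecE (i k : 'I_n) : bvec K i 0 k = (val k == val i)%:R.
Proof. by rewrite /bvec mxE eqxx /= val_eqE. Qed.

Lemma bil_coef M v w k :
  bil M v w 0 k = \sum_(i < n) \sum_(j < n) v 0 i * w 0 j * M i j 0 k.
Proof.
rewrite /bil summxE; apply: eq_bigr => i _; rewrite summxE; apply: eq_bigr => j _.
by rewrite mxE.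
Qed.

Lemma bil_coef_rows M A B (a c b d k : 'I_n) :
  bil M (A a c) (B b d) 0 k =
  \sum_(i < n) \sum_(j < n) coef A a c i * coef B b d j * coef M i j k.
Proof. by rewrite bil_coef; apply: eq_bigr => i _; apply: eq_bigr => j _; rewrite !coefE. Qed.

Lemma bil_bvec M (i j : 'I_n) : bil M (bvec K i) (bvec K j) = M i j.
Proof.
apply/rowP => k; rewrite bil_coef (bigD1 i) // [X in _ + X = _]big1 => [|i' ne]; last first.
  by apply: big1 => j' _; rewrite bvecE val_eqE (negbTE ne) !mul0r.
rewrite (bigD1 j) // [X in _ + X + _ = _]big1 => [|j' ne]; last first.
  by rewrite (bvecE j j') val_eqE (negbTE ne) mulr0 mul0r.
by rewrite !bvecE !eqxx !mul1r !addr0.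
Qed.

Lemma sw_bvec (c : 'I_n) F : sw (bvec K c) F =
  \sum_(j < n) \sum_(k < n | (val j + val k == val c)%N) F (bvec K j) (bvec K k).
Proof.
rewrite /sw (bigD1 c) // [X in _ + X = _]big1 => [|i ne]; last first.
  by apply: big1 => j _; apply: big1 => k _; rewrite bvecE val_eqE (negbTE ne) scale0r.
rewrite addr0; apply: eq_bigr => j _; apply: eq_bigr => k _.
by rewrite bvecE eqxx scale1r.
Qed.

Lemma sw_bvec_coef (V : 'I_n -> 'I_n -> 'rV[K]_n) (c k : 'I_n) (g : nat -> nat -> K) :
  (forall j l : 'I_n, V j l 0 k = g j l) ->
  (\sum_(j < n) \sum_(l < n | (val j + val l == val c)%N) V j l) 0 k
    = \sum_(j < (val c).+1) g j (val c - j)%N.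
Proof.
move=> H; rewrite -(sum_antidiagonal g (ltn_ord c)) summxE; apply: eq_bigr => j _.
by rewrite summxE; apply: eq_bigr => l _; exact: H.
Qed.

Section LowBasis.
Variable i0 : 'I_n.
Hypothesis hi0 : val i0 = 0%N.

Lemma ceps_bvec0 : ceps (bvec K i0) = 1.
Proof. by rewrite /ceps (big_pred1 i0) ?bvecE ?eqxx // => k; rewrite /= -val_eqE hi0. Qed.

Lemma sw_bvec0 F : sw (bvec K i0) F = F (bvec K i0) (bvec K i0).
Proof.
rewrite sw_bvec (bigD1 i0) // [X in _ + X = _]big1 => [|j ne]; last first.
  by apply: big1 => k /eqP e; exfalso; move: ne e; rewrite -val_eqE hi0; move: (val j) (val k); lia.
by rewrite addr0 (big_pred1 i0) // => k /=; rewrite hi0 -val_eqE hi0 add0n.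
Qed.

Variable i1 : 'I_n.
Hypothesis hi1 : val i1 = 1%N.

Lemma sw_bvec1 F : sw (bvec K i1) F = F (bvec K i0) (bvec K i1) + F (bvec K i1) (bvec K i0).
Proof.
rewrite sw_bvec (bigD1 i0) // (bigD1 i1) /=; last by rewrite -val_eqE hi0 hi1.
rewrite [X in _ + (_ + X) = _]big1 => [|j /andP[n0 n1]]; last first.
  by apply: big1 => k /eqP e; exfalso; move: n0 n1 e; rewrite -!val_eqE /= hi0 hi1;
    move: (val j) (val k); lia.
rewrite addr0 (big_pred1 i1) /=; last by move=> k /=; rewrite -!val_eqE /= hi0 hi1.
by rewrite (big_pred1 i0) // => k /=; rewrite -!val_eqE /= hi0 hi1; move: (val k); lia.
Qed.

Lemma coef_10_1_neq0 M N : coalg_morph M -> (1 < n)%N ->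
  bil N (M i1 i0) (bvec K i0) = bvec K i1 -> coef M 1 0 1 != 0.
Proof.
move=> hM hn hinv; apply/eqP => mu0.
have M10 : M i1 i0 = 0.
  apply/rowP => k; rewrite mxE -coefE hi1 hi0.
  by case: (eqVneq (k : nat) 1%N) => [->|k_ne1] //; exact: coef_10.
move/(congr1 (fun v : 'rV[K]_n => v 0 i1)): hinv; rewrite M10 bil_coef bvecE eqxx.
rewrite big1 => [|i _]; last by apply: big1 => j _; rewrite mxE !mul0r.
by move/eqP; rewrite eq_sym oner_eq0.
Qed.

End LowBasis.

End StructureConstants.

Section QCycle.
Variables (K : fieldType) (n : nat) (P D : 'I_n -> 'I_n -> 'rV[K]_n) (i0 i1 : 'I_n).
Hypotheses (hn : (1 < n)%N) (hK : [pchar K] =i pred0).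
Hypotheses (hi0 : i0 = 0%N :> nat) (hi1 : i1 = 1%N :> nat).
Hypothesis hPD : regular_qcycle P D.
Hypothesis hk : coef P 1 1 1 != 0.

Let hP : coalg_morph P := hPD.1.1.
Let hD : coalg_morph D := hPD.1.2.1.

Lemma coefP_10_1_neq0 : coef P 1 0 1 != 0.
Proof.
have [[_ [_ [L [_ [_ [_ [_ [invP _]]]]]]]] _] := hPD.
apply: (coef_10_1_neq0 hi0 hi1 hP hn (N := L)).
by have := invP (bvec K i1) (bvec K i0); rewrite sw_bvec0 // ceps_bvec0 // scale1r !bil_bvec.
Qed.

Lemma coefD_10_1_neq0 : coef D 1 0 1 != 0.
Proof.
have [[_ [_ [_ [R [_ [_ [_ [_ [invD _]]]]]]]]] _] := hPD.
apply: (coef_10_1_neq0 hi0 hi1 hD hn (N := R)).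
by have := invD (bvec K i1) (bvec K i0); rewrite sw_bvec0 // ceps_bvec0 // scale1r !bil_bvec.
Qed.

Let coefP_0c_1 := coef_0c_1_eq0 hP hn hK coefP_10_1_neq0.
Let coefD_0c_1 := coef_0c_1_eq0 hD hn hK coefD_10_1_neq0.

Lemma sum_coefD_c0_coefP1 x : (x < n)%N ->
  \sum_(j < n) coef D x 0 j * coef P 1 j 1 = coef P 1 x 1.
Proof.
move=> hx; have [_ [cyc1 _]] := hPD; pose X := Ordinal hx.
have := cyc1 (bvec K i1) (bvec K i0) (bvec K X).
rewrite sw_bvec0 // sw_bvec => /(congr1 (fun v : 'rV[K]_n => v 0 i1)).
rewrite !bil_bvec bil_coef_rows hi1 hi0.
rewrite (@sw_bvec_coef K n _ X i1 (fun j l => \sum_(i < n) \sum_(i' < n)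
   coef P 1 l i * coef P 0 j i' * coef P i i' 1)); last first.
  by move=> j l; rewrite !bil_bvec bil_coef_rows hi1 hi0.
rewrite /= (sum_single (T := fun i => \sum_(j < n) coef P 1 0 i * coef D x 0 j * coef P i j 1)
  (i0 := 1%N)); [|lia|]; last first.
  by move=> i hi ne; apply: big1 => j _; rewrite coef_10 // !mul0r.
rewrite (sum_single (T := fun j => \sum_(i < n) \sum_(i' < n)
   coef P 1 (x - j)%N i * coef P 0 j i' * coef P i i' 1) (i0 := 0%N)) //; last first.
  move=> j hj ne; apply: big1 => i _; apply: big1 => i' _.
  by rewrite (coef_0c hP hn coefP_0c_1) ?(negbTE ne) ?mulr0 ?mul0r //; lia.
rewrite (sum2_single (T := fun i i' => coef P 1 (x - 0)%N i * coef P 0 0 i' * coef P i i' 1)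
  (a0 := 1%N) (c0 := 0%N)); [|lia|lia|]; last first.
  move=> i i' hi hi' ne; case: (eqVneq i 1%N) => [ei|ni].
    move: ne; rewrite ei eqxx /= => ne.
    by rewrite (coef_0c hP hn coefP_0c_1) ?(negbTE ne) ?andbF ?mulr0 ?mul0r //; lia.
  by rewrite (coef_1c hP hn coefP_0c_1) ?mul0r //; lia.
rewrite subn0 (coef_00_0 hP hn) mulr1 => E.
apply: (mulfI coefP_10_1_neq0); rewrite mulr_sumr [RHS]mulrC -E.
by apply: eq_bigr => j _; rewrite mulrA.
Qed.

Lemma sum_coefP_c0_coefP1 x : (x < n)%N ->
  \sum_(j < n) coef P x 0 j * coef P 1 j 1 = coef P 1 x 1.
Proof.
move=> hx; have [_ [cyc1 _]] := hPD; pose X := Ordinal hx.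
have := cyc1 (bvec K i1) (bvec K X) (bvec K i0).
rewrite (sw_bvec0 hi0) sw_bvec => /(congr1 (fun v : 'rV[K]_n => v 0 i1)).
rewrite [in RHS]bil_bvec [in RHS]bil_bvec bil_coef_rows hi1 hi0.
rewrite (@sw_bvec_coef K n _ X i1 (fun j l => \sum_(i < n) \sum_(i' < n)
   coef P 1 j i * coef D 0 l i' * coef P i i' 1)); last first.
  by move=> j l; rewrite !bil_bvec bil_coef_rows hi1 hi0.
rewrite /= (sum_single (T := fun i => \sum_(j < n) coef P 1 0 i * coef P x 0 j * coef P i j 1)
  (i0 := 1%N)); [|lia|]; last first.
  by move=> i hi ne; apply: big1 => j _; rewrite coef_10 // !mul0r.
rewrite (sum_single (T := fun j => \sum_(i < n) \sum_(i' < n)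
   coef P 1 j i * coef D 0 (x - j)%N i' * coef P i i' 1) (i0 := x)) //; last first.
  move=> j hj ne; apply: big1 => i _; apply: big1 => i' _.
  rewrite (coef_0c hD hn coefD_0c_1) ?mulr0 ?mul0r //; try lia.
  by rewrite (_ : ((x - j)%N == 0%N) = false) ?mulr0 ?mul0r //; lia.
rewrite (sum2_single (T := fun i i' => coef P 1 x i * coef D 0 (x - x)%N i' * coef P i i' 1)
  (a0 := 1%N) (c0 := 0%N)); [|lia|lia|]; last first.
  move=> i i' hi hi' ne; case: (eqVneq i 1%N) => [ei|ni].
    move: ne; rewrite ei eqxx /= => ne.
    by rewrite subnn (coef_0c hD hn coefD_0c_1) ?(negbTE ne) ?andbF ?mulr0 ?mul0r //; lia.
  by rewrite (coef_1c hP hn coefP_0c_1) ?mul0r //; lia.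
rewrite subnn (coef_00_0 hD hn) mulr1 => E.
apply: (mulfI coefP_10_1_neq0); rewrite mulr_sumr [RHS]mulrC E.
by apply: eq_bigr => j _; rewrite mulrA.
Qed.

Lemma coefD_c0 c j : (c < n)%N -> (j < n)%N -> coef D c 0 j = (c == j)%:R.
Proof. exact: (coef_c0_id hD hn coefD_0c_1 (h := fun j => coef P 1 j 1) hk sum_coefD_c0_coefP1). Qed.

Lemma coefP_c0 c j : (c < n)%N -> (j < n)%N -> coef P c 0 j = (c == j)%:R.
Proof. exact: (coef_c0_id hP hn coefP_0c_1 (h := fun j => coef P 1 j 1) hk sum_coefP_c0_coefP1). Qed.

Lemma coefD_11_1 : coef D 1 1 1 = coef P 1 1 1.
Proof.
have [_ [cyc1 _]] := hPD.
have DP10 : D i1 i0 = P i1 i0.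
  by apply/rowP => k; rewrite -!coefE hi0 coefD_c0 ?coefP_c0.
have := cyc1 (bvec K i1) (bvec K i1) (bvec K i1).
rewrite !(sw_bvec1 hi0 hi1) !bil_bvec DP10 addrC => /addrI.
move/(congr1 (fun v : 'rV[K]_n => v 0 i1)); rewrite !bil_coef_rows hi1 hi0.
rewrite (sum2_single (T := fun i j => coef P 1 0 i * coef D 1 1 j * coef P i j 1)
  (a0 := 1%N) (c0 := 1%N)); [|lia|lia|]; last first.
  move=> i j hi hj ne; case: (eqVneq i 1%N) => [ei|ni].
    have nj : j != 1%N by move: ne; rewrite ei eqxx.
    by rewrite ei (coef_1c hD hn coefD_0c_1 1 nj) mulr0 mul0r.
  by rewrite coefP_c0 // (_ : (1 == i)%N = false) ?mul0r //; lia.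
rewrite (sum2_single (T := fun i j => coef P 1 0 i * coef P 1 1 j * coef P i j 1)
  (a0 := 1%N) (c0 := 1%N)); [|lia|lia|]; last first.
  move=> i j hi hj ne; case: (eqVneq i 1%N) => [ei|ni].
    have nj : j != 1%N by move: ne; rewrite ei eqxx.
    by rewrite ei (coef_1c hP hn coefP_0c_1 1 nj) mulr0 mul0r.
  by rewrite coefP_c0 // (_ : (1 == i)%N = false) ?mul0r //; lia.
by move/(mulIf hk); rewrite coefP_c0 // eqxx !mul1r.
Qed.

Lemma qcycle2_coef_r1 r : (r < n)%N ->
  coef P 1 1 1 * coef D r 1 1 + \sum_(i < n) coef P r 1 i * coef D i 1 1 =
  \sum_(i < n) coef D r 1 i * coef P i 1 1 + coef P 1 1 1 * coef P r 1 1.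
Proof.
move=> hr; have [_ [_ [cyc2 _]]] := hPD; pose Rr := Ordinal hr.
have := cyc2 (bvec K Rr) (bvec K i1) (bvec K i1).
rewrite !(sw_bvec1 hi0 hi1) !bil_bvec.
move/(congr1 (fun v : 'rV[K]_n => v 0 i1)); rewrite !mxE !bil_coef_rows hi1 hi0 /=.
rewrite (sum2_single (T := fun i j => coef P r 0 i * coef P 1 1 j * coef D i j 1)
  (a0 := r) (c0 := 1%N)); [|lia|lia|]; last first.
  move=> i j hi hj ne; case: (eqVneq i r) => [ei|ni].
    have nj : j != 1%N by move: ne; rewrite ei eqxx.
    by rewrite ei (coef_1c hP hn coefP_0c_1 1 nj) mulr0 mul0r.
  by rewrite coefP_c0 // (_ : (r == i)%N = false) ?mul0r //; lia.
rewrite (sum2_single (T := fun i j => coef D r 0 i * coef D 1 1 j * coef P i j 1)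
  (a0 := r) (c0 := 1%N)); [|lia|lia|]; last first.
  move=> i j hi hj ne; case: (eqVneq i r) => [ei|ni].
    have nj : j != 1%N by move: ne; rewrite ei eqxx.
    by rewrite ei (coef_1c hD hn coefD_0c_1 1 nj) mulr0 mul0r.
  by rewrite coefD_c0 // (_ : (r == i)%N = false) ?mul0r //; lia.
have inner (A N B : 'I_n -> 'I_n -> 'rV[K]_n) :
    (forall c j, (c < n)%N -> (j < n)%N -> coef N c 0 j = (c == j)%:R) ->
    \sum_(i < n) \sum_(j < n) coef A r 1 i * coef N 1 0 j * coef B i j 1 =
    \sum_(i < n) coef A r 1 i * coef B i 1 1.
  move=> hN; apply: eq_bigr => i _.
  rewrite (sum_single (T := fun j => coef A r 1 i * coef N 1 0 j * coef B i j 1) (i0 := 1%N)).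
  - by rewrite hN // mulr1.
  - by [].
  - by move=> j hj ne; rewrite hN // (_ : (1 == j)%N = false) ?mulr0 ?mul0r //; lia.
rewrite (inner P P D coefP_c0) (inner D D P coefD_c0).
by rewrite !coefP_c0 // !coefD_c0 // !eqxx !mul1r coefD_11_1.
Qed.

Section ColumnOne.
Variable r : nat.
Hypothesis IH : forall r', (r' < r)%N -> forall k, coef D r' 1 k = coef P r' 1 k.

Lemma coefD_r1_ge2 k : (2 <= k)%N -> coef D r 1 k = coef P r 1 k.
Proof.
move=> hk2; case: (ltnP r n) => hr; last by rewrite !coef_out // hr.
case: (ltnP k n) => hkn; last by rewrite !coef_out // hkn !orbT.
rewrite -(prednK (ltnW hk2)) !coef_comultS //; try lia.
apply: eq_bigr => a _; apply: eq_bigr => c _.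
have ha := ltn_ord a; have hc := ltn_ord c.
case: (eqVneq (nat_of_ord c) 0%N) => [ec|nc].
  rewrite ec !subn0 coefD_c0 ?coefP_c0; try lia.
  case: (eqVneq (nat_of_ord a) k.-1) => [ea|na]; last by rewrite !mul0r.
  by rewrite IH //; lia.
have ec : nat_of_ord c = 1%N by lia.
rewrite ec subnn coefD_c0 ?coefP_c0; try lia.
case: (eqVneq (r - a)%N 1%N) => [e2|n2]; last by rewrite !mulr0.
by rewrite IH //; lia.
Qed.

Lemma coefD_r1_1 : coef D r 1 1 = coef P r 1 1.
Proof.
case: (ltnP r n) => hr; last by rewrite !coef_out // hr.
case: (posnP r) => [->|r_gt0]; first by rewrite coefD_0c_1 coefP_0c_1.
set E := coef D r 1 1 - coef P r 1 1.
set SPD := \sum_(i < n) coef P r 1 i * coef D i 1 1.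
set SPP := \sum_(i < n) coef P r 1 i * coef P i 1 1.
set SDP := \sum_(i < n) coef D r 1 i * coef P i 1 1.
have ePD : SPD - SPP = coef P r 1 r * E.
  rewrite -sumrB (eq_bigr (fun i : 'I_n => coef P r 1 i * (coef D i 1 1 - coef P i 1 1)));
    last by move=> i _; rewrite mulrBr.
  rewrite (sum_single (T := fun i => coef P r 1 i * (coef D i 1 1 - coef P i 1 1)) hr) //.
  move=> i hi hne; case: (ltnP i r) => h; first by rewrite IH // subrr mulr0.
  by rewrite (coef_lt_vanish hP hn coefP_0c_1 (u := i) (a := r)) ?mul0r //; lia.
have eDP : SDP - SPP = E * coef P 1 1 1.
  rewrite -sumrB (eq_bigr (fun i : 'I_n => (coef D r 1 i - coef P r 1 i) * coef P i 1 1));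
    last by move=> i _; rewrite mulrBl.
  rewrite (sum_single (T := fun i => (coef D r 1 i - coef P r 1 i) * coef P i 1 1) (i0 := 1%N)) //.
  move=> i hi hne; case: (posnP i) => [->|i_gt0].
    by rewrite (coef_counit hD) // (coef_counit hP) // subrr mul0r.
  by rewrite coefD_r1_ge2 ?subrr ?mul0r //; lia.
have : coef P r 1 r * E = 0.
  transitivity ((coef P 1 1 1 * coef D r 1 1 + SPD) - (SDP + coef P 1 1 1 * coef P r 1 1));
    last by rewrite qcycle2_coef_r1 // subrr.
  by rewrite -[SPD](subrK SPP) -[SDP](subrK SPP) ePD eDP /E; ring.
rewrite (coef_diag_1 hP hn coefP_c0 hr) => /eqP.
rewrite !mulf_eq0 (negbTE hk) orbF (proj1 (pcharf0P K) hK) subr_eq0.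
by case/orP => /eqP //; lia.
Qed.

End ColumnOne.

Lemma coefD_r1 r k : coef D r 1 k = coef P r 1 k.
Proof.
elim/ltn_ind: r k => r IH [|[|k]]; [|exact: coefD_r1_1 | exact: coefD_r1_ge2].
case: (ltnP r n) => hr; last by rewrite !coef_out // hr.
by rewrite (coef_counit hD) // (coef_counit hP).
Qed.

End QCycle.

Theorem proposition4p2 (K : closedFieldType) (hK : [pchar K] =i pred0)
  (n : nat) (hn : (2 <= n)%N) (P D : 'I_n -> 'I_n -> 'rV[K]_n) :
  regular_qcycle P D ->
  (forall i1 : 'I_n, val i1 = 1%N -> P i1 i1 0 i1 <> 0%R) ->
  forall (b c i1 : 'I_n), val i1 = 1%N -> D b i1 0 c = P b i1 0 c.
Proof.
move=> hPD hk b c i1 hi1.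
have hi0 : Ordinal (ltnW hn) = 0%N :> nat by [].
have hk' : coef P 1 1 1 != 0 by apply/eqP; rewrite -[1%N]hi1 coefE; exact: hk.
by rewrite -!coefE hi1 (coefD_r1 hn hK hi0 hi1 hPD hk').
Qed.
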